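(* Let $A,B$ be closed linear relations in $X^2$ such that $\{A,B\}$ is a dual pair with $(A^* )_s|_{D(B)}=B_s$ and $(B^* )_s|_{D(A)}=A_s$. If $B^*(0)\cap N(A^* )=\{0\}$ and $A^*(0)\cap N(B^* )=\{0\}$, then $n(A^*,B)=n(B^*,A)$, where $n(A^*,B)=\dim(D(A^* )/D(B))$ and $n(B^*,A)=\dim(D(B^* )/D(A))$.
   Context: $X$ is a complex Hilbert space; linear relations are linear subspaces of $X^2=X\times X$, with domain $D(T)$, $N(T)=\{x:(x,0)\in T\}$, $T(0)=\{y:(0,y)\in T\}$. Adjoint: $T^*=\{(f,g):\langle g,x\rangle=\langle f,y\rangle\ \forall(x,y)\in T\}$. For closed $T$: $T_\infty=\{(0,y)\in T\}$ and $T_s=T\ominus T_\infty$ (orthogonal complement in $T$), an operator with $D(T_s)=D(T)$. Closed relations $A,B$ form a dual pair if $A\subset B^*$ (equivalently $B\subset A^*$). $(A^* )_s|_{D(B)}=B_s$ means the restriction of the operator $(A^* )_s$ to $D(B)$ is $B_s$. *)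

From mathcomp Require Import all_boot all_algebra.
From mathcomp Require Import reals.
From mathcomp.real_closed Require Import complex.
Import GRing.Theory Num.Theory.
Set Implicit Arguments. Unset Strict Implicit. Unset Printing Implicit Defensive.
Local Open Scope ring_scope.
Local Open Scope complex_scope.

Definition hnorm (R : realType) (X : lmodType R[i]) (ip : X -> X -> R[i]) (x : X) : R :=
  Num.sqrt (complex.Re (ip x x)).

Definition hconv (R : realType) (X : lmodType R[i]) (ip : X -> X -> R[i])
  (u : nat -> X) (l : X) : Prop :=
  forall e : R, 0 < e -> exists N : nat, forall n, (N <= n)%N -> hnorm ip (u n - l) < e.

Definition hcauchy (R : realType) (X : lmodType R[i]) (ip : X -> X -> R[i])
  (u : nat -> X) : Prop :=
  forall e : R, 0 < e -> exists N : nat, forall n m, (N <= n)%N -> (N <= m)%N ->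
    hnorm ip (u n - u m) < e.

Definition is_hilbert (R : realType) (X : lmodType R[i]) (ip : X -> X -> R[i]) : Prop :=
  [/\ (forall (a : R[i]) (x y z : X), ip (a *: x + y) z = a * ip x z + ip y z),
      (forall x y : X, ip y x = (ip x y)^*),
      (forall x : X, 0 <= ip x x),
      (forall x : X, ip x x = 0 -> x = 0) &
      (forall u : nat -> X, hcauchy ip u -> exists l, hconv ip u l)].

Definition linrel (X : Type) := X * X -> Prop.

Definition is_linrel (R : realType) (X : lmodType R[i]) (T : linrel X) : Prop :=
  T (0, 0) /\
  forall (a : R[i]) (p q : X * X), T p -> T q -> T (a *: p.1 + q.1, a *: p.2 + q.2).

(* closed in X^2 (product topology = sequential closedness in the norm) *)
Definition is_closed_rel (R : realType) (X : lmodType R[i]) (ip : X -> X -> R[i])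
  (T : linrel X) : Prop :=
  forall (u v : nat -> X) (x y : X), (forall n, T (u n, v n)) ->
    hconv ip u x -> hconv ip v y -> T (x, y).

Definition dom (X : Type) (T : linrel X) : X -> Prop := fun x => exists y, T (x, y).
Definition ker (X : zmodType) (T : linrel X) : X -> Prop := fun x => T (x, 0).
Definition mul0 (X : zmodType) (T : linrel X) : X -> Prop := fun y => T (0, y).

Definition adj (R : realType) (X : lmodType R[i]) (ip : X -> X -> R[i])
  (T : linrel X) : linrel X :=
  fun p => forall x y, T (x, y) -> ip p.2 x = ip p.1 y.

Definition rel_infty (X : zmodType) (T : linrel X) : linrel X :=
  fun p => T p /\ p.1 = 0.

(* T_s = T ⊖ T_infty : elements of T orthogonal in X^2 to T_infty
   (inner product on X^2: <(x,y),(x',y')> = <x,x'> + <y,y'>) *)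
Definition rel_s (R : realType) (X : lmodType R[i]) (ip : X -> X -> R[i])
  (T : linrel X) : linrel X :=
  fun p => T p /\ forall q, rel_infty T q -> ip p.1 q.1 + ip p.2 q.2 = 0.

Definition restr (X : Type) (T : linrel X) (D : X -> Prop) : linrel X :=
  fun p => T p /\ D p.1.

Definition rel_sub (X : Type) (S T : linrel X) : Prop := forall p, S p -> T p.

(* Equality of the dimensions of the quotient spaces V1/W1 and V2/W2
   (for subspaces W1 ⊂ V1, W2 ⊂ V2 of X): there is a linear map on V1 with
   values in V2 inducing a linear bijection V1/W1 -> V2/W2. *)
Definition quot_dim_eq (R : realType) (X : lmodType R[i])
  (V1 W1 V2 W2 : X -> Prop) : Prop :=
  exists f : X -> X,
    [/\ (forall x, V1 x -> V2 (f x)),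
        (forall (a : R[i]) x y, V1 x -> V1 y -> f (a *: x + y) = a *: f x + f y),
        (forall x, V1 x -> (W2 (f x) <-> W1 x)) &
        (forall y, V2 y -> exists x, V1 x /\ W2 (y - f x))].

From mathcomp Require Import all_boot all_order all_algebra.
From mathcomp Require Import boolp classical_sets reals.
From mathcomp.real_closed Require Import complex.
From mathcomp Require Import ring lra.
Import Order.TTheory GRing.Theory Num.Theory.
Local Open Scope ring_scope.
Local Open Scope complex_scope.
Set Implicit Arguments. Unset Strict Implicit.

(* Write [A^* ⊖ B] for the orthogonal complement of [B] in [A^*] inside [X^2].
   Since [B ⊂ A^*] is closed, the projection theorem in the Hilbert space [X^2]
   gives [A^* = B ⊕ (A^* ⊖ B)], and [(f, g) ↦ (-g, f)] maps [A^* ⊖ B] into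
   [B^* ⊖ A].  If [(f, g) ∈ A^* ⊖ B] and [f ∈ D(B)], then [(A^* )_s|_{D(B)} = B_s]
   forces [f = 0], and [A^*(0) ∩ N(B^* ) = {0}] then forces [g = 0].  Hence
   writing [x ∈ D(A^* )] as [x = m + d] with [d ∈ D(B)] and [(m, g) ∈ A^* ⊖ B]
   determines [g ∈ D(B^* )] uniquely, and [x ↦ g] induces the isomorphism
   [D(A^* )/D(B) ≅ D(B^* )/D(A)]: the symmetric hypotheses make its kernel [D(B)],
   and decomposing [B^*] along [A] shows that it is onto. *)

Lemma subrBB (V : zmodType) (x y z : V) : (x - y) - (x - z) = z - y.
Proof. by rewrite opprB [x - y + _]addrC addrA subrK. Qed.

Lemma sqrt_ltE (R : rcfType) (a e : R) : 0 < e -> (Num.sqrt a < e) = (a < e ^+ 2).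
Proof. by move=> e0; rewrite -ltr_sqrt ?exprn_gt0 // sqrtr_sqr gtr0_norm. Qed.

Lemma eventually_invSn_lt (R : archiRealFieldType) (e : R) :
  0 < e -> exists N, forall n, (N <= n)%N -> n.+1%:R^-1 < e.
Proof.
move=> e0; exists (Num.bound e^-1) => n Nn.
have ei : 0 <= e^-1 by rewrite invr_ge0 ltW.
rewrite -[e]invrK ltf_pV2 ?posrE ?invr_gt0 ?ltr0n //.
by apply: lt_le_trans (archi_boundP ei) _; rewrite ler_nat leqW.
Qed.

Lemma le0_of_le_mul_pos (R : realFieldType) (y K : R) :
  0 <= K -> (forall e, 0 < e -> y <= K * e) -> y <= 0.
Proof.
move=> K0 yK; apply/ler_addgt0Pr => e e0; rewrite add0r.
have K1 : 0 < K + 1 by lra.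
have := yK _ (divr_gt0 e0 K1).
have : K * (e / (K + 1)) <= e by rewrite mulrA ler_pdivrMr //; nra.
lra.
Qed.

Section InnerProduct.
Variables (R : realType) (V : lmodType R[i]) (ip : V -> V -> R[i]).
Hypothesis ipH : is_hilbert ip.

Lemma ipDZl a x y z : ip (a *: x + y) z = a * ip x z + ip y z.
Proof. by case: ipH. Qed.

Lemma ipC x y : ip y x = (ip x y)^*.
Proof. by case: ipH. Qed.

Lemma ip_ge0 x : 0 <= ip x x.
Proof. by case: ipH. Qed.

Lemma ip_eq0 x : ip x x = 0 -> x = 0.
Proof. by case: ipH => _ _ _ /(_ x). Qed.

Lemma ip0l z : ip 0 z = 0.
Proof.
by have := ipDZl 1 0 0 z; rewrite scale1r addr0 mul1r -{1}[ip 0 z]addr0 => /addrI.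
Qed.

Lemma ipDl x y z : ip (x + y) z = ip x z + ip y z.
Proof. by rewrite -[x in LHS]scale1r ipDZl mul1r. Qed.

Lemma ipZl a x z : ip (a *: x) z = a * ip x z.
Proof. by rewrite -[_ *: _]addr0 ipDZl ip0l addr0. Qed.

Lemma ipNl x z : ip (- x) z = - ip x z.
Proof. by rewrite -scaleN1r ipZl mulN1r. Qed.

Lemma ipDr x y z : ip z (x + y) = ip z x + ip z y.
Proof. by rewrite ipC ipDl rmorphD /= -!ipC. Qed.

Lemma ipZr a x z : ip z (a *: x) = a^* * ip z x.
Proof. by rewrite ipC ipZl rmorphM /= -ipC. Qed.

Lemma ipNr x z : ip z (- x) = - ip z x.
Proof. by rewrite ipC ipNl rmorphN /= -ipC. Qed.

Lemma ipBr x y z : ip z (x - y) = ip z x - ip z y.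
Proof. by rewrite ipDr ipNr. Qed.

Lemma ip0r z : ip z 0 = 0.
Proof. by rewrite ipC ip0l rmorph0. Qed.

Lemma hcauchy_hconv u : hcauchy ip u -> exists l, hconv ip u l.
Proof. by case: ipH => _ _ _ _; apply. Qed.

Definition re_ip x y : R := complex.Re (ip x y).
Definition normsq x : R := re_ip x x.

Lemma ip_normsq x : ip x x = (normsq x)%:C.
Proof. by have := ger0_Im (ip_ge0 x); rewrite /normsq /re_ip; case: (ip x x) => a b /= ->. Qed.

Lemma normsq_ge0 x : 0 <= normsq x.
Proof. by rewrite -lecR -ip_normsq ip_ge0. Qed.

Lemma normsq_eq0 x : normsq x = 0 -> x = 0.
Proof. by move=> x0; apply: ip_eq0; rewrite ip_normsq x0. Qed.

Lemma hnormE x : hnorm ip x = Num.sqrt (normsq x).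
Proof. by []. Qed.

Lemma re_ipDl x y z : re_ip (x + y) z = re_ip x z + re_ip y z.
Proof. by rewrite /re_ip ipDl; case: (ip x z); case: (ip y z). Qed.

Lemma re_ipDr x y z : re_ip z (x + y) = re_ip z x + re_ip z y.
Proof. by rewrite /re_ip ipDr; case: (ip z x); case: (ip z y). Qed.

Lemma re_ipNl x z : re_ip (- x) z = - re_ip x z.
Proof. by rewrite /re_ip ipNl; case: (ip x z). Qed.

Lemma re_ipNr x z : re_ip z (- x) = - re_ip z x.
Proof. by rewrite /re_ip ipNr; case: (ip z x). Qed.

Lemma re_ipZl (c : R) x z : re_ip (c%:C *: x) z = c * re_ip x z.
Proof. by rewrite /re_ip ipZl; case: (ip x z) => a b /=; rewrite mul0r subr0. Qed.

Lemma re_ipZr (c : R) x z : re_ip z (c%:C *: x) = c * re_ip z x.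
Proof. by rewrite /re_ip ipZr; case: (ip z x) => a b /=; rewrite oppr0 mul0r subr0. Qed.

Lemma re_ipC x y : re_ip y x = re_ip x y.
Proof. by rewrite /re_ip ipC; case: (ip x y). Qed.

Lemma normsqZ (c : R) v : normsq (c%:C *: v) = c ^+ 2 * normsq v.
Proof. by rewrite /normsq re_ipZl re_ipZr mulrA expr2. Qed.

Lemma normsqN v : normsq (- v) = normsq v.
Proof. by rewrite /normsq re_ipNl re_ipNr opprK. Qed.

Lemma normsq_subZ z t (c : R) :
  normsq (z - c%:C *: t) = normsq z - 2 * c * re_ip z t + c ^+ 2 * normsq t.
Proof.
by rewrite /normsq re_ipDl !re_ipDr !re_ipNl !re_ipNr !re_ipZl !re_ipZr (re_ipC z t); ring.
Qed.

Lemma parallelogram a b :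
  normsq (a - b) + normsq (a + b) = 2 * normsq a + 2 * normsq b.
Proof. by rewrite /normsq !re_ipDl !re_ipDr !re_ipNl !re_ipNr (re_ipC a b); ring. Qed.

Lemma hconv_const0 (u : nat -> V) y : (forall n, u n = 0) -> hconv ip u y -> y = 0.
Proof.
move=> u0 uy; apply: normsq_eq0; apply/le_anti; rewrite normsq_ge0 andbT.
apply: (@le0_of_le_mul_pos _ _ 1) => // e e0.
have se : 0 < Num.sqrt e by rewrite sqrtr_gt0.
have [N HN] := uy _ se.
by have := HN N (leqnn N); rewrite u0 sub0r hnormE normsqN ltr_sqrt // mul1r => /ltW.
Qed.

(* For [D = 0] this is the Cauchy-Schwarz inequality; the proof evaluates the
   hypothesis at the minimiser [c = re_ip z t / normsq t]. *)
Lemma sqr_re_ip_le z t D : (forall c : R, D <= normsq (z - c%:C *: t)) ->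
  re_ip z t ^+ 2 <= (normsq z - D) * normsq t.
Proof.
move=> Dle; have [/normsq_eq0 ->|t0] := eqVneq (normsq t) 0.
  by rewrite /normsq /re_ip !ip0r /= expr0n mulr0.
have tp : 0 < normsq t by rewrite lt0r t0 normsq_ge0.
have := ler_wpM2r (ltW tp) (Dle (re_ip z t / normsq t)).
rewrite normsq_subZ.
set r := re_ip z t; set q := normsq t.
have -> : (normsq z - 2 * (r / q) * r + (r / q) ^+ 2 * q) * q = normsq z * q - r ^+ 2.
  by field.
lra.
Qed.

Section Projection.
Variable S : V -> Prop.
Hypotheses (S0 : S 0) (SDZ : forall a u v, S u -> S v -> S (a *: u + v)).

Lemma subspaceZ a u : S u -> S (a *: u).
Proof. by move=> Su; rewrite -[_ *: _]addr0; apply: SDZ. Qed.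

Lemma subspaceD u v : S u -> S v -> S (u + v).
Proof. by move=> Su Sv; rewrite -[u]scale1r; apply: SDZ. Qed.

Variable x : V.

Let D := inf [set normsq (x - s) | s in S]%classic.

Lemma has_inf_dist : has_inf [set normsq (x - s) | s in S]%classic.
Proof.
split; first by exists (normsq (x - 0)), 0.
by exists 0 => _ [s _ <-]; exact: normsq_ge0.
Qed.

Lemma dist_ge s : S s -> D <= normsq (x - s).
Proof. by move=> Ss; apply: (ge_inf has_inf_dist.2); exists s. Qed.

Lemma minimizing_seq_ex :
  exists u : nat -> V, forall n, S (u n) /\ normsq (x - u n) < D + n.+1%:R^-1.
Proof.
have /choice [u Hu] : forall n : nat, exists s, S s /\ normsq (x - s) < D + n.+1%:R^-1.
  move=> n; have np : 0 < n.+1%:R^-1 :> R by rewrite invr_gt0 ltr0n.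
  by have [_ [s Ss <-] ?] := inf_adherent np has_inf_dist; exists s.
by exists u.
Qed.

(* The midpoint of [s] and [t] lies in [S], so its distance to [x] is at least
   [D]; the parallelogram law turns this into the bound. *)
Lemma normsq_sub_le s t : S s -> S t ->
  normsq (s - t) <= 2 * (normsq (x - s) - D) + 2 * (normsq (x - t) - D).
Proof.
move=> Ss St; pose h : R := 2^-1.
have Smid : S (h%:C *: (s + t)) by apply/subspaceZ/subspaceD.
have hh : h%:C * 2 = 1 :> R[i] by rewrite /h /=; congr Complex; field.
have mid : x - h%:C *: (s + t) = h%:C *: ((x - t) + (x - s)).
  rewrite addrACA -opprD [t + s]addrC scalerBr; congr (_ - _).
  by rewrite -[x in x + x]scale1r -scalerDl scalerA -[1 + 1]/(2 : R[i]) hh scale1r.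
have le := dist_ge Smid; rewrite mid normsqZ in le.
have par := parallelogram (x - t) (x - s).
have -> : s - t = x - t - (x - s) by rewrite opprB [x - t + _]addrC addrA subrK.
have h4 : h ^+ 2 = 4^-1 by rewrite /h; field.
rewrite h4 in le; lra.
Qed.

Lemma re_ip_sqr_le_gap s t : S s -> S t ->
  re_ip (x - s) t ^+ 2 <= (normsq (x - s) - D) * normsq t.
Proof.
move=> Ss St; apply: sqr_re_ip_le => c.
by have := dist_ge (SDZ c%:C St Ss); rewrite opprD addrA addrAC.
Qed.

Variable u : nat -> V.
Hypothesis u_min : forall n, S (u n) /\ normsq (x - u n) < D + n.+1%:R^-1.

Lemma minimizing_seq_cauchy : hcauchy ip u.
Proof.
move=> e e0; have e4 : 0 < e ^+ 2 / 4 by rewrite divr_gt0 ?exprn_gt0.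
have [N HN] := eventually_invSn_lt e4.
exists N => n m Nn Nm; rewrite hnormE sqrt_ltE //.
have [Sn un] := u_min n; have [Sm um] := u_min m.
move: un um (normsq_sub_le Sn Sm) (HN n Nn) (HN m Nm).
set i := n.+1%:R^-1; set j := m.+1%:R^-1; move=> *; lra.
Qed.

(* [re_ip (x - l) t] splits at [u n]; the first part is controlled by the
   distance gap of [u n], the second by Cauchy-Schwarz and [u n --> l]. *)
Lemma minimizing_seq_orth l : hconv ip u l -> forall t, S t -> re_ip (x - l) t = 0.
Proof.
move=> ul t St; set c := re_ip (x - l) t.
have t0 := normsq_ge0 t.
have c2 : c ^+ 2 <= 0.
  apply: (@le0_of_le_mul_pos _ _ (4 * normsq t)); first by rewrite mulr_ge0.
  move=> e e0; have [N1 HN1] := eventually_invSn_lt e0.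
  have se : 0 < Num.sqrt e by rewrite sqrtr_gt0.
  have [N2 HN2] := ul _ se.
  pose n := maxn N1 N2; have [Sn un] := u_min n.
  have b1 := HN1 n (leq_maxl _ _).
  have := HN2 n (leq_maxr _ _); rewrite hnormE ltr_sqrt // => b2.
  have h1 := re_ip_sqr_le_gap Sn St.
  have h2 : re_ip (u n - l) t ^+ 2 <= normsq (u n - l) * normsq t.
    by rewrite -[normsq (u n - l)]subr0; apply: sqr_re_ip_le => c'; exact: normsq_ge0.
  have -> : c = re_ip (x - u n) t + re_ip (u n - l) t by rewrite /c -re_ipDl addrA subrK.
  move: (ler_wpM2r t0 (ltW b1)) (ler_wpM2r t0 (ltW b2)) (ler_wpM2r t0 (ltW un)) h1 h2.
  move: (sqr_ge0 (re_ip (x - u n) t - re_ip (u n - l) t)).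
  set a := re_ip _ t; set b := re_ip _ t; set i := n.+1%:R^-1.
  move=> *; nra.
by apply/eqP; rewrite -sqrf_eq0 eq_le c2 sqr_ge0.
Qed.

End Projection.

Theorem orthogonal_projection (S : V -> Prop) : S 0 ->
  (forall a u v, S u -> S v -> S (a *: u + v)) ->
  (forall u l, (forall n, S (u n)) -> hconv ip u l -> S l) ->
  forall x, exists2 l, S l & forall t, S t -> ip (x - l) t = 0.
Proof.
move=> S0 SDZ Scl x.
have [u u_min] := minimizing_seq_ex S0 x.
have u_cauchy := minimizing_seq_cauchy S0 SDZ u_min.
have [l ul] := hcauchy_hconv u_cauchy.
have Sl : S l by apply: (Scl u) => // n; case: (u_min n).
exists l => // t St.
(* the real part of [ip (x - l) ('i *: t)] is the imaginary part of [ip (x - l) t] *)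
have := minimizing_seq_orth S0 SDZ u_min ul St.
have := minimizing_seq_orth S0 SDZ u_min ul (subspaceZ S0 SDZ 'i St).
rewrite /re_ip ipZr; case: (ip (x - l) t) => a b /= im0 re0.
by move: im0; rewrite mul0r sub0r mulN1r opprK re0 => ->.
Qed.

End InnerProduct.

Section ProductSpace.
Variables (R : realType) (X : lmodType R[i]) (ip : X -> X -> R[i]).
Hypothesis ipH : is_hilbert ip.

Definition prod_ip (p q : X * X) : R[i] := ip p.1 q.1 + ip p.2 q.2.

Lemma normsq_prod v : normsq prod_ip v = normsq ip v.1 + normsq ip v.2.
Proof. by rewrite /normsq /re_ip /prod_ip; case: (ip v.1 v.1); case: (ip v.2 v.2). Qed.

Lemma hnorm_fst_le v : hnorm ip v.1 <= hnorm prod_ip v.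
Proof. by rewrite !hnormE normsq_prod ler_wsqrtr // lerDl normsq_ge0. Qed.

Lemma hnorm_snd_le v : hnorm ip v.2 <= hnorm prod_ip v.
Proof. by rewrite !hnormE normsq_prod ler_wsqrtr // lerDr normsq_ge0. Qed.

Lemma hconv_fst (w : nat -> X * X) l :
  hconv prod_ip w l -> hconv ip (fun n => (w n).1) l.1.
Proof.
move=> wl e /wl [N HN]; exists N => n Nn.
exact: le_lt_trans (hnorm_fst_le (w n - l)) (HN n Nn).
Qed.

Lemma hconv_snd (w : nat -> X * X) l :
  hconv prod_ip w l -> hconv ip (fun n => (w n).2) l.2.
Proof.
move=> wl e /wl [N HN]; exists N => n Nn.
exact: le_lt_trans (hnorm_snd_le (w n - l)) (HN n Nn).
Qed.

Lemma hcauchy_fst (w : nat -> X * X) :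
  hcauchy prod_ip w -> hcauchy ip (fun n => (w n).1).
Proof.
move=> Cw e /Cw [N HN]; exists N => n m Nn Nm.
exact: le_lt_trans (hnorm_fst_le (w n - w m)) (HN n m Nn Nm).
Qed.

Lemma hcauchy_snd (w : nat -> X * X) :
  hcauchy prod_ip w -> hcauchy ip (fun n => (w n).2).
Proof.
move=> Cw e /Cw [N HN]; exists N => n m Nn Nm.
exact: le_lt_trans (hnorm_snd_le (w n - w m)) (HN n m Nn Nm).
Qed.

Lemma hconv_pair (w : nat -> X * X) l1 l2 :
  hconv ip (fun n => (w n).1) l1 -> hconv ip (fun n => (w n).2) l2 ->
  hconv prod_ip w (l1, l2).
Proof.
move=> w1 w2 e e0; have e2 : 0 < e / 2 by rewrite divr_gt0.
have [N1 HN1] := w1 _ e2; have [N2 HN2] := w2 _ e2.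
exists (maxn N1 N2) => n Nn.
move: (HN1 n (leq_trans (leq_maxl _ _) Nn)) (HN2 n (leq_trans (leq_maxr _ _) Nn)).
rewrite !hnormE !sqrt_ltE // normsq_prod /=.
have e4 : (e / 2) ^+ 2 * 4 = e ^+ 2 by field.
move: e4 (sqr_ge0 e); set q := (e / 2) ^+ 2; set E := e ^+ 2; move=> *; lra.
Qed.

Lemma prod_ip_hilbert : is_hilbert prod_ip.
Proof.
split.
- by move=> a x y z; rewrite /prod_ip /= !(ipDZl ipH); ring.
- by move=> x y; rewrite /prod_ip rmorphD /= -!(ipC ipH).
- by move=> x; rewrite /prod_ip addr_ge0 ?(ip_ge0 ipH).
- move=> [x1 x2]; rewrite /prod_ip /= => /eqP; rewrite paddr_eq0 ?(ip_ge0 ipH) //.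
  by case/andP => /eqP/(ip_eq0 ipH) -> /eqP/(ip_eq0 ipH) ->.
- move=> w Cw.
  have [l1 wl1] := hcauchy_hconv ipH (hcauchy_fst Cw).
  have [l2 wl2] := hcauchy_hconv ipH (hcauchy_snd Cw).
  by exists (l1, l2); exact: hconv_pair.
Qed.

Lemma closed_rel_seq (T : linrel X) : is_closed_rel ip T ->
  forall w l, (forall n, T (w n)) -> hconv prod_ip w l -> T l.
Proof.
move=> Tc w [l1 l2] Tw wl.
apply: Tc (hconv_fst wl) (hconv_snd wl) => n.
by case: (w n) (Tw n).
Qed.

End ProductSpace.

Section LinearRelations.
Variables (R : realType) (X : lmodType R[i]) (ip : X -> X -> R[i]).
Hypothesis ipH : is_hilbert ip.
Implicit Types A B T : linrel X.

Lemma linrel_subspace T : is_linrel T ->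
  forall a (u v : X * X), T u -> T v -> T (a *: u + v).
Proof. by move=> [_ TDZ] a [u1 u2] [v1 v2]; apply: TDZ. Qed.

Lemma linrelDZ T : is_linrel T ->
  forall a f g f' g', T (f, g) -> T (f', g') -> T (a *: f + f', a *: g + g').
Proof. by move=> [_ TDZ] a f g f' g'; apply: (TDZ a (f, g) (f', g')). Qed.

Lemma linrelB T : is_linrel T ->
  forall f g f' g', T (f, g) -> T (f', g') -> T (f - f', g - g').
Proof.
move=> HT f g f' g' Tfg Tfg'.
by have := linrelDZ HT (-1) Tfg' Tfg; rewrite !scaleN1r ![- _ + _]addrC.
Qed.

Lemma linrelN T : is_linrel T -> forall f g, T (f, g) -> T (- f, - g).
Proof. by move=> HT f g Tfg; have := linrelB HT HT.1 Tfg; rewrite !sub0r. Qed.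

Lemma dom0 T : is_linrel T -> dom T 0.
Proof. by case=> T0 _; exists 0. Qed.

Lemma dom_linear T : is_linrel T ->
  forall a x y, dom T x -> dom T y -> dom T (a *: x + y).
Proof. by move=> HT a x y [gx Tx] [gy Ty]; exists (a *: gx + gy); apply: linrelDZ. Qed.

Lemma domB T : is_linrel T -> forall x y, dom T x -> dom T y -> dom T (x - y).
Proof. by move=> HT x y [gx Tx] [gy Ty]; exists (gx - gy); apply: linrelB. Qed.

Lemma adj_linrel T : is_linrel (adj ip T).
Proof.
split=> [x y _|a p q Tp Tq x y Txy] /=; first by rewrite !(ip0l ipH).
by rewrite !(ipDZl ipH) (Tp x y Txy) (Tq x y Txy).
Qed.

Lemma dual_pair_sym A B : rel_sub A (adj ip B) -> rel_sub B (adj ip A).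
Proof.
move=> AB [x y] Bxy u v Auv /=.
by rewrite (ipC ipH u y) -(AB _ Auv x y Bxy) -(ipC ipH).
Qed.

Definition adj_ominus A B : linrel X :=
  fun p => adj ip A p /\ forall q, B q -> prod_ip ip p q = 0.

Lemma adj_ominus_linrel A B : is_linrel (adj_ominus A B).
Proof.
split; first by split=> [|q _]; [exact: (adj_linrel A).1 | rewrite /prod_ip !(ip0l ipH) addr0].
move=> a p q [Ap Bp] [Aq Bq]; split; first exact: (adj_linrel A).2.
move=> r Br; have := Bp r Br; have := Bq r Br.
by rewrite /prod_ip /= !(ipDZl ipH) addrACA -mulrDr => -> ->; rewrite mulr0 addr0.
Qed.

Lemma adj_ominus_rot A B f g : adj_ominus A B (f, g) -> adj_ominus B A (- g, f).
Proof.
move=> [Afg Bfg]; split=> [x y Bxy | [x y] Axy] /=.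
  by apply/eqP; rewrite (ipNl ipH) -addr_eq0; apply/eqP/(Bfg (x, y)).
by rewrite /prod_ip /= (ipNl ipH) (Afg x y Axy) addNr.
Qed.

Lemma adj_decomp A B : is_linrel B -> is_closed_rel ip B -> rel_sub B (adj ip A) ->
  forall p, adj ip A p -> exists2 b, B b & adj_ominus A B (p - b).
Proof.
move=> HB HBc BA [f g] Afg.
have [[b1 b2] Bb orth] := orthogonal_projection (prod_ip_hilbert ipH) HB.1
  (linrel_subspace HB) (closed_rel_seq ipH HBc) (f, g).
by exists (b1, b2) => //; split; [exact (linrelB (adj_linrel A) Afg (BA _ Bb)) | exact: orth].
Qed.

Lemma rel_infty_subspace T : is_linrel T ->
  forall a u v, rel_infty T u -> rel_infty T v -> rel_infty T (a *: u + v).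
Proof.
move=> HT a [u1 u2] [v1 v2] [Tu /= u10] [Tv /= v10].
by split; [exact (linrel_subspace HT a Tu Tv) | rewrite /= u10 v10 scaler0 addr0].
Qed.

Lemma rel_infty_closed T : is_closed_rel ip T ->
  forall w l, (forall n, rel_infty T (w n)) -> hconv (prod_ip ip) w l -> rel_infty T l.
Proof.
move=> Tc w l Tw wl; split; first by apply: (closed_rel_seq ipH Tc) wl => n; case: (Tw n).
by apply: (hconv_const0 ipH) (hconv_fst ipH wl) => n; case: (Tw n).
Qed.

Lemma rel_s_dom T : is_linrel T -> is_closed_rel ip T ->
  forall f, dom T f -> exists g, rel_s ip T (f, g).
Proof.
move=> HT Tc f [g Tfg].
have [[d1 d2] [Td /= d10] orth] := orthogonal_projection (prod_ip_hilbert ipH)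
  (conj HT.1 (erefl _)) (rel_infty_subspace HT) (rel_infty_closed Tc) (f, g).
rewrite {}d10 in Td orth; exists (g - d2); split; first by rewrite -[f]subr0; apply: linrelB.
by move=> q Tq; have := orth q Tq; rewrite /prod_ip /= subr0.
Qed.

Lemma adj_ominus_dom_eq0 A B : is_linrel B -> is_closed_rel ip B ->
  (forall p, restr (rel_s ip (adj ip A)) (dom B) p <-> rel_s ip B p) ->
  (forall x, mul0 (adj ip A) x -> ker (adj ip B) x -> x = 0) ->
  forall f g, adj_ominus A B (f, g) -> dom B f -> f = 0 /\ g = 0.
Proof.
move=> HB HBc sAB trivAB f g Mfg Bf.
have [b Bsfb] := rel_s_dom HB HBc Bf.
have [[[Afb Asfb] _] [Bfb _]] := ((sAB (f, b)).2 Bsfb, Bsfb).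
(* [(0, g - b)] lies in [(A^* )_oo], orthogonal to [(f, b)] in [(A^* )_s]; with
   [(f, g)] orthogonal to [(f, b)] in [B] this gives [|f|^2 + |b|^2 = 0]. *)
have gb : ip b g - ip b b = 0.
  rewrite -(ipBr ipH); have := Asfb (0, g - b); rewrite /= (ip0r ipH) add0r; apply.
  by split=> //; have := linrelB (adj_linrel A) Mfg.1 Afb; rewrite subrr.
have bg : ip g b = ip b b by rewrite (ipC ipH b g) (subr0_eq gb) -(ipC ipH).
have ff_bb : ip f f + ip b b = 0 by rewrite -bg; exact: Mfg.2 _ Bfb.
have f0 : f = 0.
  by apply: (ip_eq0 ipH); move/eqP: ff_bb; rewrite paddr_eq0 ?(ip_ge0 ipH) // => /andP[/eqP].
split=> //; subst f; apply: trivAB; first exact: Mfg.1.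
have [Bg _] := adj_ominus_rot Mfg.
by have := linrelN (adj_linrel B) Bg; rewrite opprK oppr0.
Qed.

End LinearRelations.

Definition adj_ominus_rep (R : realType) (X : lmodType R[i]) (ip : X -> X -> R[i])
  (A B : linrel X) (x g : X) : Prop :=
  exists2 m, dom B (x - m) & adj_ominus ip A B (m, g).

Section DualPair.
Variables (R : realType) (X : lmodType R[i]) (ip : X -> X -> R[i]) (A B : linrel X).
Hypotheses (ipH : is_hilbert ip) (HA : is_linrel A) (HAc : is_closed_rel ip A)
  (HB : is_linrel B) (HBc : is_closed_rel ip B) (AB : rel_sub A (adj ip B))
  (sAB : forall p, restr (rel_s ip (adj ip A)) (dom B) p <-> rel_s ip B p)
  (sBA : forall p, restr (rel_s ip (adj ip B)) (dom A) p <-> rel_s ip A p)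
  (trivBA : forall x, mul0 (adj ip B) x -> ker (adj ip A) x -> x = 0)
  (trivAB : forall x, mul0 (adj ip A) x -> ker (adj ip B) x -> x = 0).
Local Notation rep := (adj_ominus_rep ip A B).

Lemma adj_ominus_rep_uniq x g g' : rep x g -> rep x g' -> g = g'.
Proof.
move=> [m Bxm Mmg] [m' Bxm' Mmg'].
have Bmm : dom B (m - m') by rewrite -[m - m'](subrBB x); exact: domB.
have Mmm := linrelB (adj_ominus_linrel ipH A B) Mmg Mmg'.
by have [_ /subr0_eq] := adj_ominus_dom_eq0 ipH HB HBc sAB trivAB Mmm Bmm.
Qed.

Lemma adj_ominus_rep_total x : dom (adj ip A) x -> exists g, rep x g.
Proof.
move=> [y Axy]; have [[b1 b2] Bb Mxy] := adj_decomp ipH HB HBc (dual_pair_sym ipH AB) Axy.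
exists (y - b2), (x - b1); last exact Mxy.
by rewrite subKr; exists b2.
Qed.

Lemma adj_ominus_rep_dom x g : rep x g -> dom (adj ip B) g.
Proof.
move=> [m _ /(adj_ominus_rot ipH) [Bgm _]]; exists (- m).
by have := linrelN (adj_linrel ipH B) Bgm; rewrite opprK.
Qed.

Lemma adj_ominus_repDZ a x y g h : rep x g -> rep y h -> rep (a *: x + y) (a *: g + h).
Proof.
move=> [mx Bx Mx] [my By My]; exists (a *: mx + my).
  by rewrite opprD addrACA -scalerBr; exact: dom_linear.
exact (linrelDZ (adj_ominus_linrel ipH A B) a Mx My).
Qed.

Lemma adj_ominus_rep_ker x g : rep x g -> (dom A g <-> dom B x).
Proof.
move=> [m Bxm Mmg]; split=> [Ag | Bx].
  have Ag' : dom A (- g) by rewrite -sub0r; exact: domB (dom0 HA) Ag.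
  have [_ m0] := adj_ominus_dom_eq0 ipH HA HAc sBA trivBA (adj_ominus_rot ipH Mmg) Ag'.
  by rewrite -(subr0 x) -m0.
have Bm : dom B m by rewrite -(subKr x m); exact: domB.
have [_ ->] := adj_ominus_dom_eq0 ipH HB HBc sAB trivAB Mmg Bm.
exact: dom0.
Qed.

Lemma adj_ominus_rep_surj y : dom (adj ip B) y ->
  exists x g, [/\ dom (adj ip A) x, rep x g & dom A (y - g)].
Proof.
move=> [w Byw]; have [[a1 a2] Aa Myw] := adj_decomp ipH HA HAc AB Byw.
have Mrot := adj_ominus_rot ipH Myw.
exists (- (w - a2)), (y - a1); split.
- by exists (y - a1); case: Mrot.
- by exists (- (w - a2)); rewrite ?subrr; [exact: dom0 | exact: Mrot].
- by rewrite subKr; exists a2.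
Qed.

End DualPair.

Lemma quot_dim_eq_of_rel (R : realType) (X : lmodType R[i])
  (V1 W1 V2 W2 : X -> Prop) (P : X -> X -> Prop) :
  (forall a x y, V1 x -> V1 y -> V1 (a *: x + y)) ->
  (forall x g g', P x g -> P x g' -> g = g') ->
  (forall x, V1 x -> exists g, P x g) ->
  (forall x g, P x g -> V2 g) ->
  (forall a x y g h, P x g -> P y h -> P (a *: x + y) (a *: g + h)) ->
  (forall x g, P x g -> (W2 g <-> W1 x)) ->
  (forall y, V2 y -> exists x g, [/\ V1 x, P x g & W2 (y - g)]) ->
  quot_dim_eq V1 W1 V2 W2.
Proof.
move=> V1DZ Puniq Ptotal Prange PDZ Pker Psurj.
have /choice [f Pf] : forall x, exists g, V1 x -> P x g.
  move=> x; have [/Ptotal [g Pg]|nVx] := pselect (V1 x); first by exists g.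
  by exists 0 => /nVx.
exists f; split.
- by move=> x /Pf /Prange.
- move=> a x y Vx Vy.
  exact: Puniq (Pf _ (V1DZ a x y Vx Vy)) (PDZ a _ _ _ _ (Pf _ Vx) (Pf _ Vy)).
- by move=> x /Pf /Pker.
- move=> y /Psurj [x [g [Vx Pg W2g]]]; exists x; split=> //.
  by rewrite (Puniq _ _ _ (Pf _ Vx) Pg).
Qed.

Theorem proposition2p5 (R : realType) (X : lmodType R[i]) (ip : X -> X -> R[i])
  (A B : linrel X) :
  is_hilbert ip ->
  is_linrel A -> is_closed_rel ip A ->
  is_linrel B -> is_closed_rel ip B ->
  rel_sub A (adj ip B) ->
  (forall p, restr (rel_s ip (adj ip A)) (dom B) p <-> rel_s ip B p) ->
  (forall p, restr (rel_s ip (adj ip B)) (dom A) p <-> rel_s ip A p) ->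
  (forall x, mul0 (adj ip B) x -> ker (adj ip A) x -> x = 0) ->
  (forall x, mul0 (adj ip A) x -> ker (adj ip B) x -> x = 0) ->
  quot_dim_eq (dom (adj ip A)) (dom B) (dom (adj ip B)) (dom A).
Proof.
move=> ipH HA HAc HB HBc AB sAB sBA trivBA trivAB.
apply: (@quot_dim_eq_of_rel _ _ _ _ _ _ (adj_ominus_rep ip A B)).
- exact: dom_linear (adj_linrel ipH A).
- exact: adj_ominus_rep_uniq ipH HB HBc sAB trivAB.
- exact: adj_ominus_rep_total ipH HB HBc AB.
- exact: adj_ominus_rep_dom ipH.
- exact: adj_ominus_repDZ ipH HB.
- exact: adj_ominus_rep_ker ipH HA HAc HB HBc sAB sBA trivBA trivAB.
- exact: adj_ominus_rep_surj ipH HA HAc HB AB.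
Qed.
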